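(* (Type weakening.) In DCC, if $\Delta;\Gamma\vdash M:A$, $\Delta;\Gamma\vdash B:U_i$, and $x$ is a variable not occurring in $\Gamma$, then $\Delta;\Gamma,x{:}B\vdash M:A$.
   Context: DCC: expressions $A,B,L,M,N::=x\mid U_i\mid\Pi x{:}A.B\mid L@M\mid\ell_i\{\overline M\}$, where $\ell_i$ are label names disjoint from variables and $\overline M=M_1,\dots,M_n$ ($n\ge0$). Type contexts $\Gamma::=\cdot\mid\Gamma,x{:}A$; label contexts $\Delta::=\cdot\mid\Delta,\ell_i(\{\overline x{:}\overline A\},x{:}A\mapsto M:B)$. Substitution standard with $\ell\{\overline M\}[N/x]=\ell\{\overline{M[N/x]}\}$. Reduction: $\Delta\vdash\ell\{\overline M\}@N\triangleright L[\overline M/\overline x,N/x]$ when $\ell(\{\overline x{:}\overline A\},x{:}A\mapsto L:B)\in\Delta$. Equivalence $\Delta\vdash M\equiv N$: common reduct, or the $\eta$-rule ($\Delta\vdash L\triangleright^*\ell\{\overline N\}$, $\Delta\vdash M\triangleright^*M'$, $\ell(\{\overline x{:}\overline A\},x{:}A\mapsto N:B)\in\Delta$, $\Delta\vdash N[\overline N/\overline x]\equiv M'@x$ give $\Delta\vdash L\equiv M$) and its symmetric version. Typing $\Delta;\Gamma\vdash M:A$ and formation $\vdash\Delta;\Gamma$ (mutual): variables from a well-formed context, $U_i:U_{i+1}$, $\Pi x{:}A.B:U_{\max(i,j)}$, $M@N:B[N/x]$ when $M:\Pi x{:}A.B$ and $N:A$, conversion along $\equiv$ to a type $B:U_i$,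 and: if $\vdash\Delta;\Gamma$, $\ell(\{\overline x{:}\overline A\},x{:}A\mapsto M:B)\in\Delta$, $|\overline M|=|\overline x|$ and $\Delta;\Gamma\vdash M_k:A_k[M_1/x_1,\dots,M_{k-1}/x_{k-1}]$ for all $k$, then $\Delta;\Gamma\vdash\ell\{\overline M\}:\Pi x{:}A[\overline M/\overline x].B[\overline M/\overline x]$. Formation: $\vdash\cdot;\cdot$; fresh label entries may be added when $\Delta;\overline x{:}\overline A\vdash\Pi x{:}A.B:U_i$ and $\Delta;\overline x{:}\overline A,x{:}A\vdash M:B$; $\vdash\Delta;\Gamma$ and $\Delta;\Gamma\vdash A:U_i$ give $\vdash\Delta;\Gamma,x{:}A$. *)

(* Locally nameless representation: free variables are named atoms (nat),
   bound variables of Pi are de Bruijn indices.  Labels are a separate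
   namespace (nat), disjoint from variables. *)
From Stdlib Require Import List Arith PeanoNat.
Import ListNotations.

Definition atom := nat.
Definition label := nat.

Inductive term : Type :=
  | BVar (n : nat)
  | FVar (x : atom)
  | Univ (i : nat)
  | Pi (A B : term)                (* Pi x:A.B, x bound as index 0 in B *)
  | App (M N : term)
  | Lab (l : label) (Ms : list term).

Fixpoint open_rec (k : nat) (u : term) (t : term) : term :=
  match t with
  | BVar n => if Nat.eqb n k then u else BVar n
  | FVar x => FVar x
  | Univ i => Univ i
  | Pi A B => Pi (open_rec k u A) (open_rec (S k) u B)
  | App M N => App (open_rec k u M) (open_rec k u N)
  | Lab l Ms => Lab l (map (open_rec k u) Ms)
  end.
Definition open (t u : term) : term := open_rec 0 u t.

Fixpoint close_rec (k : nat) (x : atom) (t : term) : term :=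
  match t with
  | BVar n => BVar n
  | FVar y => if Nat.eqb y x then BVar k else FVar y
  | Univ i => Univ i
  | Pi A B => Pi (close_rec k x A) (close_rec (S k) x B)
  | App M N => App (close_rec k x M) (close_rec k x N)
  | Lab l Ms => Lab l (map (close_rec k x) Ms)
  end.
Definition close (x : atom) (t : term) : term := close_rec 0 x t.

Fixpoint lookup (y : atom) (s : list (atom * term)) : option term :=
  match s with
  | [] => None
  | (x, u) :: s' => if Nat.eqb x y then Some u else lookup y s'
  end.

Fixpoint msubst (s : list (atom * term)) (t : term) : term :=
  match t with
  | BVar n => BVar n
  | FVar y => match lookup y s with Some u => u | None => FVar y end
  | Univ i => Univ i
  | Pi A B => Pi (msubst s A) (msubst s B)
  | App M N => App (msubst s M) (msubst s N)
  | Lab l Ms => Lab l (map (msubst s) Ms)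
  end.

(* Label context entry  l({x1:A1,...,xn:An}, x:A |-> M : B).
   A_k, A, M, B are written with the names x1..xn, x as free variables. *)
Record lentry : Type := LEntry {
  lname   : label;
  lparams : list (atom * term);
  larg    : atom;
  ldom    : term;
  lbody   : term;
  lcod    : term
}.

Definition lctx := list lentry.
Definition tctx := list (atom * term).     (* Gamma; head = most recent *)

(* Gamma, x:A  is  (x, A) :: Gamma ;  the context x1:A1,...,xn:An is
   rev (lparams e). *)
Definition dom (G : tctx) : list atom := map fst G.
Definition param_names (e : lentry) : list atom := map fst (lparams e).
Definition param_ctx (e : lentry) : tctx := rev (lparams e).

Inductive red (D : lctx) : term -> term -> Prop :=
  | red_lab : forall e Ms N,
      In e D ->
      red D (App (Lab (lname e) Ms) N)
            (msubst (combine (param_names e) Ms ++ [(larg e, N)]) (lbody e)).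

Inductive step (D : lctx) : term -> term -> Prop :=
  | step_red : forall M N, red D M N -> step D M N
  | step_pi1 : forall A A' B, step D A A' -> step D (Pi A B) (Pi A' B)
  | step_pi2 : forall (L : list atom) A B B',
      (forall y, ~ In y L -> step D (open B (FVar y)) (open B' (FVar y))) ->
      step D (Pi A B) (Pi A B')
  | step_app1 : forall M M' N, step D M M' -> step D (App M N) (App M' N)
  | step_app2 : forall M N N', step D N N' -> step D (App M N) (App M N')
  | step_lab : forall l Ms1 M M' Ms2,
      step D M M' -> step D (Lab l (Ms1 ++ M :: Ms2)) (Lab l (Ms1 ++ M' :: Ms2)).

Inductive reds (D : lctx) : term -> term -> Prop :=
  | reds_refl : forall M, reds D M M
  | reds_step : forall M N P, step D M N -> reds D N P -> reds D M P.

Inductive equiv (D : lctx) : term -> term -> Prop :=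
  | equiv_red : forall M N P, reds D M P -> reds D N P -> equiv D M N
  | equiv_eta : forall L M M' e Ns,
      reds D L (Lab (lname e) Ns) ->
      reds D M M' ->
      In e D ->
      equiv D (msubst (combine (param_names e) Ns) (lbody e))
              (App M' (FVar (larg e))) ->
      equiv D L M
  | equiv_eta_sym : forall L M M' e Ns,
      reds D L (Lab (lname e) Ns) ->
      reds D M M' ->
      In e D ->
      equiv D (msubst (combine (param_names e) Ns) (lbody e))
              (App M' (FVar (larg e))) ->
      equiv D M L.

Inductive wf : lctx -> tctx -> Prop :=
  | wf_empty : wf [] []
  | wf_label : forall D e i,
      ~ In (lname e) (map lname D) ->
      has_type D (param_ctx e) (Pi (ldom e) (close (larg e) (lcod e))) (Univ i) ->
      has_type D ((larg e, ldom e) :: param_ctx e) (lbody e) (lcod e) ->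
      wf (e :: D) []
  | wf_var : forall D G x A i,
      wf D G ->
      has_type D G A (Univ i) ->
      ~ In x (dom G) ->
      wf D ((x, A) :: G)
with has_type : lctx -> tctx -> term -> term -> Prop :=
  | ty_var : forall D G x A,
      wf D G -> In (x, A) G -> has_type D G (FVar x) A
  | ty_univ : forall D G i,
      wf D G -> has_type D G (Univ i) (Univ (S i))
  | ty_pi : forall D G A B i j (L : list atom),
      has_type D G A (Univ i) ->
      (forall y, ~ In y L ->
         has_type D ((y, A) :: G) (open B (FVar y)) (Univ j)) ->
      has_type D G (Pi A B) (Univ (Nat.max i j))
  | ty_app : forall D G M N A B,
      has_type D G M (Pi A B) ->
      has_type D G N A ->
      has_type D G (App M N) (open B N)
  | ty_conv : forall D G M A B i,
      has_type D G M A ->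
      has_type D G B (Univ i) ->
      equiv D A B ->
      has_type D G M B
  | ty_lab : forall D G e Ms,
      wf D G ->
      In e D ->
      length Ms = length (lparams e) ->
      (forall k, k < length Ms ->
         has_type D G (nth k Ms (Univ 0))
           (msubst (combine (firstn k (param_names e)) (firstn k Ms))
                   (nth k (map snd (lparams e)) (Univ 0)))) ->
      has_type D G (Lab (lname e) Ms)
        (Pi (msubst (combine (param_names e) Ms) (ldom e))
            (msubst (combine (param_names e) Ms) (close (larg e) (lcod e)))).

(* Weakening is proved for an insertion anywhere in the context, by mutual
   induction on formation and typing: the binders introduced by [ty_pi] push
   the insertion point deeper, and the cofinite quantification lets us keep
   the fresh names different from [x]. *)
From Stdlib Require Import List.
Import ListNotations.

Lemma has_type_wf : forall D G M A, has_type D G M A -> wf D G.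
Proof. intros D G M A H; induction H; auto. Qed.

Scheme wf_min := Minimality for wf Sort Prop
with has_type_min := Minimality for has_type Sort Prop.
Combined Scheme wf_has_type_min from wf_min, has_type_min.

Lemma in_dom_insert : forall (G1 G2 : tctx) (x z : atom) (B : term),
  In z (dom (G1 ++ (x, B) :: G2)) <-> z = x \/ In z (dom (G1 ++ G2)).
Proof.
  intros G1 G2 x z B. unfold dom. rewrite !map_app, !in_app_iff. simpl.
  intuition congruence.
Qed.

Lemma wf_has_type_insert : forall (x : atom) (B : term),
  (forall D G, wf D G -> forall G1 G2, G = G1 ++ G2 ->
     wf D ((x, B) :: G2) -> ~ In x (dom G1) ->
     wf D (G1 ++ (x, B) :: G2)) /\
  (forall D G M A, has_type D G M A -> forall G1 G2, G = G1 ++ G2 ->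
     wf D ((x, B) :: G2) -> ~ In x (dom G1) ->
     has_type D (G1 ++ (x, B) :: G2) M A).
Proof.
  intros x B. apply wf_has_type_min.
  - intros G1 G2 E Hw _. destruct G1; [|discriminate]. subst. assumption.
  - intros D e j _ _ _ _ _ G1 G2 E Hw _.
    destruct G1; [|discriminate]. subst. assumption.
  - intros D G y A j _ IHw _ IHt Hy G1 G2 E Hw Hx.
    destruct G1 as [|[z C] G1]; simpl in *.
    + subst. assumption.
    + injection E as -> -> ->.
      eapply wf_var.
      * apply IHw; tauto.
      * apply IHt; tauto.
      * rewrite in_dom_insert. intros [-> | Hz]; tauto.
  - intros D G y A _ IHw Hin G1 G2 E Hw Hx. subst.
    apply ty_var; auto. rewrite in_app_iff in *. simpl. tauto.
  - intros D G j _ IHw G1 G2 E Hw Hx. apply ty_univ; auto.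
  - intros D G A B0 j k L _ IHA _ IHB0 G1 G2 E Hw Hx.
    apply ty_pi with (L := x :: L); auto.
    intros y Hy. simpl in Hy.
    apply (IHB0 y ltac:(tauto) ((y, A) :: G1) G2); simpl; subst;
      intuition congruence.
  - intros D G M N A B0 _ IHM _ IHN G1 G2 E Hw Hx. eapply ty_app; eauto.
  - intros D G M A B0 j _ IHM _ IHB0 Heq G1 G2 E Hw Hx. eapply ty_conv; eauto.
  - intros D G e Ms _ IHw Hin Hlen _ IHk G1 G2 E Hw Hx.
    apply ty_lab; auto.
Qed.

Lemma has_type_weaken : forall D G M A x B,
  has_type D G M A -> wf D ((x, B) :: G) -> has_type D ((x, B) :: G) M A.
Proof.
  intros D G M A x B H Hw.
  apply (proj2 (wf_has_type_insert x B) D G M A H [] G); simpl; auto.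
Qed.

Theorem lemma3p1 :
  forall (D : lctx) (G : tctx) (M A B : term) (i : nat) (x : atom),
    has_type D G M A ->
    has_type D G B (Univ i) ->
    ~ In x (dom G) ->
    has_type D ((x, B) :: G) M A.
Proof.
  intros D G M A B i x H HB Hx.
  apply has_type_weaken; [assumption |].
  eapply wf_var; eauto using has_type_wf.
Qed.
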